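(* Let $(\lambda_k)_{k\in\mathbb{N}}$ be a decreasing sequence of positive numbers with $\lambda_k\to0$, and for each $k$ let $x^k$ be any stationary point of problem (P$_{\lambda_k}$). Then $(x^k)$ is bounded. Furthermore, suppose $\mathrm{int}\,D\cap\mathrm{int}\{x:Ax\in C\}\ne\emptyset$ and there exists $\hat x\in D$ with $A\hat x\in C$ such that $Q_{\lambda_k}(x^k)/\lambda_k\le\|\hat x\|_1/\|\hat x\|_2$ for all $k\in\mathbb{N}$. Then every accumulation point $x^\star$ of $(x^k)$ satisfies: (i) $x^\star\in D$ and $Ax^\star\in C$; (ii) $x^\star$ is a stationary point of problem (P).
   Context: Let $A\in\mathbb{R}^{m\times n}$, $b\in\mathbb{R}^m$, $\epsilon\ge0$ with $\|b\|_2>\epsilon$, $d>0$. $C:=\{y\in\mathbb{R}^m:\|y-b\|_2\le\epsilon\}$, $D:=\{x\in\mathbb{R}^n:\|x\|_2\le d\}$; $\iota_S$ is the indicator function of $S$. $\mathrm{env}(y):=\frac12((\|y-b\|_2-\epsilon)_+)^2$. $Q_\lambda(x):=(\lambda\|x\|_1+\mathrm{env}(Ax))/\|x\|_2$ on $D\setminus\{0_n\}$, $+\infty$ elsewhere. Problem (P): minimize $\|x\|_1/\|x\|_2$ subject to $\|Ax-b\|_2\le\epsilon$, $\|x\|_2\le d$, with extended objective $\Phi(x):=\|x\|_1/\|x\|_2+\iota_D(x)+\iota_C(Ax)$ for $x\ne0_n$, $\Phi(0_n)=+\infty$. Problem (P$_\lambda$): minimize $Q_\lambda$. Fréchet subdifferential: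 $\hat\partial\varphi(x):=\{v:\liminf_{z\to x,z\ne x}\frac{\varphi(z)-\varphi(x)-\langle v,z-x\rangle}{\|z-x\|_2}\ge0\}$ for $x\in\mathrm{dom}\,\varphi$. A stationary point of (P) (resp. (P$_\lambda$)) is an $x^\star$ with $0\in\hat\partial\Phi(x^\star)$ (resp. $0\in\hat\partial Q_\lambda(x^\star)$). *)

From mathcomp Require Import all_boot all_order all_algebra.
From mathcomp Require Import all_classical all_reals all_analysis.
Set Implicit Arguments. Unset Strict Implicit. Unset Printing Implicit Defensive.
Import Order.TTheory GRing.Theory Num.Theory.
Local Open Scope ring_scope.

Section Defs.
Context {R : realType}.

Definition dotv {n : nat} (u v : 'cV[R]_n) : R := \sum_(i < n) u i 0 * v i 0.
Definition norm2 {n : nat} (x : 'cV[R]_n) : R := Num.sqrt (\sum_(i < n) x i 0 ^+ 2).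
Definition norm1 {n : nat} (x : 'cV[R]_n) : R := \sum_(i < n) `|x i 0|.

Definition inC {m : nat} (b : 'cV[R]_m) (eps : R) (y : 'cV[R]_m) : Prop :=
  norm2 (y - b) <= eps.
Definition inD {n : nat} (d : R) (x : 'cV[R]_n) : Prop := norm2 x <= d.

Definition env {m : nat} (b : 'cV[R]_m) (eps : R) (y : 'cV[R]_m) : R :=
  2^-1 * (Num.max (norm2 (y - b) - eps) 0) ^+ 2.

Definition Qlam {m n : nat} (A : 'M[R]_(m, n)) (b : 'cV[R]_m) (eps d lam : R)
  (x : 'cV[R]_n) : \bar R :=
  if asbool (inD d x /\ x <> 0)
  then ((lam * norm1 x + env b eps (A *m x)) / norm2 x)%:E
  else +oo%E.

Definition Phi {m n : nat} (A : 'M[R]_(m, n)) (b : 'cV[R]_m) (eps d : R)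
  (x : 'cV[R]_n) : \bar R :=
  if asbool (x <> 0 /\ inD d x /\ inC b eps (A *m x))
  then (norm1 x / norm2 x)%:E
  else +oo%E.

(* The condition liminf_{z -> x, z <> x} (phi z - phi x - <v, z - x>)/||z - x|| >= 0
   is written out: for every e > 0 the quotient is eventually >= -e. *)
Definition frechet_subdiff {n : nat} (phi : 'cV[R]_n -> \bar R) (x v : 'cV[R]_n) : Prop :=
  phi x \is a fin_num /\
  forall e : R, 0 < e -> exists2 delta : R, 0 < delta &
    forall z : 'cV[R]_n, 0 < norm2 (z - x) < delta ->
      ((phi z - phi x - (dotv v (z - x))%:E) * (norm2 (z - x))^-1%:E
         >= (- e)%:E)%E.

Definition stationary {n : nat} (phi : 'cV[R]_n -> \bar R) (x : 'cV[R]_n) : Prop :=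
  frechet_subdiff phi x 0.

Definition interior_pt {n : nat} (S : 'cV[R]_n -> Prop) (x : 'cV[R]_n) : Prop :=
  exists2 r : R, 0 < r & forall z, norm2 (z - x) < r -> S z.

Definition accumulation_pt {n : nat} (xs : nat -> 'cV[R]_n) (p : 'cV[R]_n) : Prop :=
  forall e : R, 0 < e -> forall N : nat, exists2 k : nat, (N <= k)%N & norm2 (xs k - p) < e.

Definition bounded_seq {n : nat} (xs : nat -> 'cV[R]_n) : Prop :=
  exists M : R, forall k, norm2 (xs k) <= M.

End Defs.

From mathcomp Require Import all_boot all_order all_algebra.
From mathcomp Require Import all_classical all_reals all_analysis.
From mathcomp Require Import ring lra.
Import Order.TTheory GRing.Theory Num.Theory.
Import numFieldTopology.Exports numFieldNormedType.Exports.
Local Open Scope classical_set_scope.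
Local Open Scope ring_scope.

(* Both problems minimise a ratio N(x)/||x||_2 over a set S, with N = ||.||_1
   for (P) and N = lam ||.||_1 + env(A .) for (P_lam). When S and N are convex
   and N >= 0, Frechet stationarity at y is equivalent to the first-order
   inequality N(y) <y,z> <= N(z) ||y||^2 for all z in S: along a segment the
   numerator is convex while the denominator is bounded below by its
   linearisation <y,w>/||y||, and conversely the defect of the inequality is of
   second order in ||z - y||.
   A stationary x^k of (P_lam_k) lies in D, and Q_lam_k(x^k) <= lam_k c forces
   env(A x^k) <= c d lam_k -> 0, so accumulation points are feasible. For a
   feasible z we have env(A z) = 0, so after division by lam_k the first-order
   inequality of x^k becomes ||x^k||_1 <x^k,z> <= ||z||_1 ||x^k||^2, which
   passes to every accumulation point: that is the first-order inequality of
   (P). *)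

Lemma ler_of_sqr_le {R : realDomainType} (a c : R) :
  0 <= c -> a ^+ 2 <= c ^+ 2 -> a <= c.
Proof. by move=> c0 h; rewrite -subr_ge0; nra. Qed.

Lemma cauchy_schwarz_sum {R : realFieldType} {I : finType} (f g : I -> R) :
  (\sum_i f i * g i) ^+ 2 <= (\sum_i f i ^+ 2) * (\sum_i g i ^+ 2).
Proof.
set P := \sum_i f i * g i; set F := \sum_i f i ^+ 2; set G := \sum_i g i ^+ 2.
have G0 : 0 <= G by apply: sumr_ge0 => i _; exact: sqr_ge0.
have F0 : 0 <= F by apply: sumr_ge0 => i _; exact: sqr_ge0.
have quad_ge0 t : 0 <= F - 2 * t * P + t ^+ 2 * G.
  have -> : F - 2 * t * P + t ^+ 2 * G = \sum_i (f i - t * g i) ^+ 2.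
    rewrite /F /P /G !mulr_sumr -sumrN -!big_split /=.
    by apply: eq_bigr => i _; ring.
  by apply: sumr_ge0 => i _; exact: sqr_ge0.
have [G_eq0|G_neq0] := eqVneq G 0.
  have g0 i : g i = 0.
    apply/eqP; rewrite -sqrf_eq0; apply/eqP.
    exact: (psumr_eq0P (fun i _ => sqr_ge0 (g i)) G_eq0).
  by rewrite /P big1 ?expr0n ?mulr_ge0 // => i _; rewrite g0 mulr0.
have G_gt0 : 0 < G by rewrite lt_def G_neq0 G0.
have := quad_ge0 (P / G).
have -> : F - 2 * (P / G) * P + (P / G) ^+ 2 * G = F - P ^+ 2 / G.
  by field; rewrite G_neq0.
by rewrite subr_ge0 ler_pdivrMr.
Qed.

Section Euclidean.
Context {R : realType} {n : nat}.
Implicit Types (x y z : 'cV[R]_n).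

Lemma dotvC x y : dotv x y = dotv y x.
Proof. by apply: eq_bigr => i _; rewrite mulrC. Qed.

Lemma dotvDl x y z : dotv (x + y) z = dotv x z + dotv y z.
Proof. by rewrite /dotv -big_split; apply: eq_bigr => i _; rewrite !mxE mulrDl. Qed.

Lemma dotvZl (t : R) x y : dotv (t *: x) y = t * dotv x y.
Proof. by rewrite /dotv mulr_sumr; apply: eq_bigr => i _; rewrite !mxE mulrA. Qed.

Lemma dotvNl x y : dotv (- x) y = - dotv x y.
Proof. by rewrite -scaleN1r dotvZl mulN1r. Qed.

Lemma dotv0l y : dotv 0 y = 0.
Proof. by rewrite -(scale0r 0) dotvZl mul0r. Qed.

Lemma norm2_ge0 x : 0 <= norm2 x.
Proof. exact: sqrtr_ge0. Qed.

Lemma norm2_sqr x : norm2 x ^+ 2 = dotv x x.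
Proof.
rewrite sqr_sqrtr; last by apply: sumr_ge0 => i _; exact: sqr_ge0.
by apply: eq_bigr => i _; rewrite expr2.
Qed.

Lemma norm2_eq0 x : (norm2 x == 0) = (x == 0).
Proof.
apply/idP/eqP => [|->]; last by rewrite /norm2 big1 ?sqrtr0 // => i _; rewrite mxE expr0n.
rewrite sqrtr_eq0 => sum_le0; apply/matrixP => i j; rewrite (ord1 j) mxE.
have sum_eq0 : \sum_(k < n) x k 0 ^+ 2 = 0.
  by apply/eqP; rewrite eq_le sum_le0; apply: sumr_ge0 => k _; exact: sqr_ge0.
apply/eqP; rewrite -sqrf_eq0; apply/eqP.
exact: (psumr_eq0P (fun k _ => sqr_ge0 (x k 0)) sum_eq0).
Qed.

Lemma norm2_gt0 [x] : x <> 0 -> 0 < norm2 x.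
Proof. by move/eqP; rewrite lt_def norm2_eq0 norm2_ge0 andbT. Qed.

Lemma dotv_le x y : `|dotv x y| <= norm2 x * norm2 y.
Proof.
apply: ler_of_sqr_le; first by rewrite mulr_ge0 ?norm2_ge0.
rewrite real_normK ?num_real // exprMn !norm2_sqr.
exact: (cauchy_schwarz_sum (fun i => x i 0) (fun i => y i 0)).
Qed.

Lemma ler_dotv x y : dotv x y <= norm2 x * norm2 y.
Proof. exact: le_trans (real_ler_norm (num_real _)) (dotv_le x y). Qed.

Lemma norm2D_sqr x y :
  norm2 (x + y) ^+ 2 = norm2 x ^+ 2 + 2 * dotv x y + norm2 y ^+ 2.
Proof. by rewrite !norm2_sqr !dotvDl ![dotv _ (x + y)]dotvC !dotvDl (dotvC y x); ring. Qed.

Lemma norm2Z (t : R) x : norm2 (t *: x) = `|t| * norm2 x.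
Proof.
rewrite /norm2 -(sqrtr_sqr t) -sqrtrM ?sqr_ge0 //; congr Num.sqrt.
by rewrite mulr_sumr; apply: eq_bigr => i _; rewrite mxE exprMn.
Qed.

Lemma norm2N x : norm2 (- x) = norm2 x.
Proof. by rewrite -scaleN1r norm2Z normrN normr1 mul1r. Qed.

Lemma norm2_distC x y : norm2 (y - x) = norm2 (x - y).
Proof. by rewrite -norm2N opprB. Qed.

Lemma norm2B_sqr x y :
  norm2 (x - y) ^+ 2 = norm2 x ^+ 2 - 2 * dotv x y + norm2 y ^+ 2.
Proof.
rewrite norm2D_sqr norm2N dotvC dotvNl dotvC; ring.
Qed.

Lemma ler_norm2D x y : norm2 (x + y) <= norm2 x + norm2 y.
Proof.
apply: ler_of_sqr_le; first by rewrite addr_ge0 ?norm2_ge0.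
rewrite norm2D_sqr; have := ler_dotv x y; nra.
Qed.

Lemma ler_norm2_sub x y : norm2 x <= norm2 y + norm2 (x - y).
Proof. by apply: le_trans (ler_norm2D y (x - y)); rewrite addrC subrK. Qed.

Lemma norm2_convex x y [t : R] : 0 <= t <= 1 ->
  norm2 ((1 - t) *: x + t *: y) <= (1 - t) * norm2 x + t * norm2 y.
Proof.
move=> /andP[t0 t1]; apply: le_trans (ler_norm2D _ _) _.
by rewrite !norm2Z !ger0_norm // subr_ge0.
Qed.

Lemma norm1_ge0 x : 0 <= norm1 x.
Proof. exact: sumr_ge0. Qed.

Lemma norm1_le_norm2 x : norm1 x <= n%:R * norm2 x.
Proof.
rewrite /norm1 -[n in n%:R]card_ord -sum1_card natr_sum mulr_suml.
apply: ler_sum => i _; rewrite mul1r; apply: ler_of_sqr_le; first exact: norm2_ge0.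
rewrite real_normK ?num_real // norm2_sqr /dotv (bigD1 i) //= -expr2 lerDl.
by apply: sumr_ge0 => j _; rewrite -expr2 sqr_ge0.
Qed.

Lemma norm1_dist_le x y : `|norm1 y - norm1 x| <= n%:R * norm2 (y - x).
Proof.
apply: le_trans _ (norm1_le_norm2 _); rewrite /norm1 -sumrB.
apply: le_trans (ler_norm_sum _ _ _) _.
by apply: ler_sum => i _; rewrite !mxE ler_dist_dist.
Qed.

Lemma norm1_convex x y [t : R] : 0 <= t <= 1 ->
  norm1 ((1 - t) *: x + t *: y) <= (1 - t) * norm1 x + t * norm1 y.
Proof.
move=> /andP[t0 t1]; rewrite /norm1 !mulr_sumr -big_split; apply: ler_sum => i _.
rewrite !mxE; apply: le_trans (ler_normD _ _) _.
by rewrite !normrM (ger0_norm t0) ger0_norm // subr_ge0.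
Qed.

End Euclidean.

Lemma norm2_mulmx_le {R : realType} {m n : nat} (A : 'M[R]_(m, n)) :
  exists2 K : R, 0 <= K & forall v : 'cV[R]_n, norm2 (A *m v) <= K * norm2 v.
Proof.
set F := \sum_(i < m) \sum_(j < n) A i j ^+ 2.
have F0 : 0 <= F by do 2!apply: sumr_ge0 => ? _; exact: sqr_ge0.
exists (Num.sqrt F); first exact: sqrtr_ge0.
move=> v; apply: ler_of_sqr_le; first by rewrite mulr_ge0 ?sqrtr_ge0 ?norm2_ge0.
have sqr_sum_ge0 k (u : 'cV[R]_k) : 0 <= \sum_(i < k) u i 0 ^+ 2.
  by apply: sumr_ge0 => i _; exact: sqr_ge0.
rewrite /norm2 exprMn !sqr_sqrtr // /F mulr_suml; apply: ler_sum => i _; rewrite mxE.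
exact: (cauchy_schwarz_sum (fun j => A i j) (fun j => v j 0)).
Qed.

Section Envelope.
Context {R : realType} {m : nat} (b : 'cV[R]_m) (eps : R).
Implicit Types (y z : 'cV[R]_m).

Lemma sqr_pos_part_convex (a a1 a2 t : R) : 0 <= t <= 1 ->
  a <= (1 - t) * a1 + t * a2 ->
  Num.max (a - eps) 0 ^+ 2 <=
    (1 - t) * Num.max (a1 - eps) 0 ^+ 2 + t * Num.max (a2 - eps) 0 ^+ 2.
Proof.
move=> /andP[t0 t1] ha.
set p := Num.max (a1 - eps) 0; set q := Num.max (a2 - eps) 0.
set r := Num.max (a - eps) 0.
have p0 : 0 <= p by rewrite le_max lexx orbT.
have q0 : 0 <= q by rewrite le_max lexx orbT.
have r0 : 0 <= r by rewrite le_max lexx orbT.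
have r_le : r <= (1 - t) * p + t * q.
  have p1 : a1 - eps <= p by rewrite le_max lexx.
  have q1 : a2 - eps <= q by rewrite le_max lexx.
  rewrite ge_max addr_ge0 ?mulr_ge0 ?subr_ge0 // andbT; nra.
have jensen : ((1 - t) * p + t * q) ^+ 2 <= (1 - t) * p ^+ 2 + t * q ^+ 2.
  rewrite -subr_ge0.
  have -> : (1 - t) * p ^+ 2 + t * q ^+ 2 - ((1 - t) * p + t * q) ^+ 2 =
    t * (1 - t) * (p - q) ^+ 2 by ring.
  by rewrite mulr_ge0 ?sqr_ge0 // mulr_ge0 // subr_ge0.
by apply: le_trans jensen; rewrite ler_sqr ?nnegrE // addr_ge0 ?mulr_ge0 ?subr_ge0.
Qed.

Lemma env_ge0 y : 0 <= env b eps y.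
Proof. by rewrite mulr_ge0 ?sqr_ge0 ?invr_ge0. Qed.

Lemma env_eq0 [y] : inC b eps y -> env b eps y = 0.
Proof. by move=> yC; rewrite /env max_r ?subr_le0 // expr0n /= mulr0. Qed.

Lemma env_convex y z [t : R] : 0 <= t <= 1 ->
  env b eps ((1 - t) *: y + t *: z) <= (1 - t) * env b eps y + t * env b eps z.
Proof.
move=> t01; rewrite /env (mulrCA (1 - t)) (mulrCA t) -mulrDr ler_wpM2l ?invr_ge0 //.
apply: sqr_pos_part_convex => //.
have -> : (1 - t) *: y + t *: z - b = (1 - t) *: (y - b) + t *: (z - b).
  by rewrite !scalerBr addrACA -opprD -scalerDl subrK scale1r.
exact: norm2_convex.
Qed.

Lemma norm2_le_of_env_le y (delta : R) : 0 <= delta ->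
  env b eps y <= delta ^+ 2 / 2 -> norm2 (y - b) <= eps + delta.
Proof.
move=> delta0; rewrite /env mulrC ler_pM2r ?invr_gt0 //.
by move=> /(ler_of_sqr_le _ _ delta0); rewrite ge_max lerBlDl => /andP[].
Qed.

End Envelope.

Section RatioObjective.
Context {R : realType} {n : nat} (S : 'cV[R]_n -> Prop) (N : 'cV[R]_n -> R).
Implicit Types (x y z w : 'cV[R]_n).

Definition ratio_obj x : \bar R :=
  if asbool (S x /\ x <> 0) then (N x / norm2 x)%:E else +oo%E.

Definition ratio_vi y := forall z, S z -> N y * dotv y z <= N z * norm2 y ^+ 2.

Lemma ratio_objE [x] : S x -> x <> 0 -> ratio_obj x = (N x / norm2 x)%:E.
Proof. by move=> Sx x0; rewrite /ratio_obj asboolT. Qed.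

Lemma ratio_obj_fin_num [x] : ratio_obj x \is a fin_num -> S x /\ x <> 0.
Proof. by rewrite /ratio_obj; case: asboolP. Qed.

Lemma ratio_segment_le [y z w] [t : R] :
  w = (1 - t) *: y + t *: z -> 0 <= t <= 1 -> y <> 0 -> w <> 0 -> 0 <= N y ->
  N w <= (1 - t) * N y + t * N z ->
  N w / norm2 w - N y / norm2 y <=
    t * (N z - N y / norm2 y * dotv y z / norm2 y) / norm2 w.
Proof.
move=> w_def /andP[t0 t1] y0 w0 Ny0 Nw_le.
set r := norm2 y; set W := norm2 w; set q := N y / r.
have r0 : 0 < r := norm2_gt0 y0; have W0 : 0 < W := norm2_gt0 w0.
have q0 : 0 <= q by rewrite divr_ge0 // ltW.
have Ny_eq : N y = q * r by rewrite divfK // gt_eqF.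
have dot_yw : dotv y w = (1 - t) * r ^+ 2 + t * dotv y z.
  by rewrite w_def dotvC dotvDl !dotvZl norm2_sqr (dotvC z).
have qW_ge : (1 - t) * (q * r) + t * (q * dotv y z / r) <= q * W.
  have -> : (1 - t) * (q * r) + t * (q * dotv y z / r) = q * dotv y w / r.
    by rewrite dot_yw; field; rewrite gt_eqF.
  by rewrite -mulrA ler_wpM2l // ler_pdivrMr // mulrC ler_dotv.
rewrite ler_pdivlMr // mulrBl divfK ?gt_eqF // -/q; move: Nw_le; rewrite Ny_eq.
lra.
Qed.

Section Stationary.
Hypothesis S_convex : forall y z (t : R), 0 <= t <= 1 -> S y -> S z ->
  S ((1 - t) *: y + t *: z).
Hypothesis N_convex : forall y z (t : R), 0 <= t <= 1 -> S y -> S z ->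
  N ((1 - t) *: y + t *: z) <= (1 - t) * N y + t * N z.
Hypothesis N_ge0 : forall x, S x -> 0 <= N x.

Lemma stationary_ratio_slope_ge [y z] [e : R] :
  stationary ratio_obj y -> S z -> z != y -> 0 < e ->
  - (e * norm2 (z - y) * (norm2 y + norm2 (z - y))) <=
    N z - N y / norm2 y * dotv y z / norm2 y.
Proof.
move=> [/ratio_obj_fin_num[Sy y0] frechet] Sz zy e0.
set r := norm2 (z - y); set Lz := N z - _.
have r0 : 0 < r by apply: norm2_gt0; apply/eqP; rewrite subr_eq0.
have Ny0 : 0 < norm2 y := norm2_gt0 y0.
have [delta delta0 hdelta] := frechet e e0.
set t := Num.min 1 (Num.min delta (norm2 y) / (2 * r)).
have t0 : 0 < t by rewrite lt_min ltr01 divr_gt0 ?mulr_gt0 // lt_min delta0.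
have t01 : 0 <= t <= 1 by rewrite (ltW t0) ge_min lexx.
have tr_lt : t * r < Num.min delta (norm2 y).
  have : t <= Num.min delta (norm2 y) / (2 * r) by rewrite ge_min lexx orbT.
  rewrite ler_pdivlMr ?mulr_gt0 // => h.
  have : 0 < Num.min delta (norm2 y) by rewrite lt_min delta0.
  nra.
set w := (1 - t) *: y + t *: z.
have wy : norm2 (w - y) = t * r.
  rewrite /w scalerBl scale1r addrAC [y - _ - y]addrAC subrr add0r addrC -scalerBr.
  by rewrite norm2Z ger0_norm // ltW.
have w0 : w <> 0.
  move=> w0; move: tr_lt; rewrite -wy w0 sub0r norm2N lt_min ltxx; lra.
have Nw0 : 0 < norm2 w := norm2_gt0 w0.
have slope : - e <= (N w / norm2 w - N y / norm2 y) / (t * r).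
  have := hdelta w; rewrite wy mulr_gt0 //= (lt_le_trans tr_lt) ?ge_min ?lexx //.
  rewrite (ratio_objE (S_convex _ _ _ t01 Sy Sz) w0) (ratio_objE Sy y0) dotv0l.
  by rewrite -!EFinB -EFinM lee_fin subr0 => /(_ isT).
have := ratio_segment_le (erefl w) t01 y0 w0 (N_ge0 _ Sy) (N_convex _ _ _ t01 Sy Sz).
rewrite -/Lz => segment.
have Lz_ge : - (e * r * norm2 w) <= Lz.
  move: slope; rewrite ler_pdivlMr ?mulr_gt0 // => slope.
  have := le_trans slope segment; rewrite ler_pdivlMr // => h.
  nra.
apply: le_trans Lz_ge; rewrite lerN2 ler_wpM2l ?mulr_ge0 ?(ltW e0) ?(ltW r0) //.
apply: le_trans (ler_norm2_sub w y) _.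
by rewrite wy lerD2l ger_pMl //; case/andP: t01.
Qed.

Lemma stationary_ratio_vi y : stationary ratio_obj y -> ratio_vi y.
Proof.
move=> st z Sz; have [Sy y0] := ratio_obj_fin_num st.1.
have Ny0 : 0 < norm2 y := norm2_gt0 y0.
suff Lz_ge0 : 0 <= N z - N y / norm2 y * dotv y z / norm2 y.
  move: Lz_ge0; rewrite subr_ge0.
  have -> : N y / norm2 y * dotv y z / norm2 y = N y * dotv y z / norm2 y ^+ 2.
    by field; rewrite gt_eqF.
  by rewrite ler_pdivrMr ?exprn_gt0.
have [->|zy] := eqVneq z y.
  by rewrite -norm2_sqr expr2 mulrA divfK ?gt_eqF // mulfK ?gt_eqF // subrr.
set r := norm2 (z - y); have r0 : 0 < r by apply: norm2_gt0; apply/eqP; rewrite subr_eq0.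
apply/ler_addgt0Pr => e e0.
have c0 : 0 < r * (norm2 y + r) by rewrite mulr_gt0 ?addr_gt0.
have := stationary_ratio_slope_ge st Sz zy (divr_gt0 e0 c0).
by rewrite -mulrA divfK ?gt_eqF // -subr_ge0 opprK.
Qed.

End Stationary.

Lemma ratio_increment_ge y z (e : R) : y <> 0 -> z <> 0 -> 0 <= N y ->
  N y * dotv y z <= N z * norm2 y ^+ 2 ->
  2 * norm2 (z - y) <= norm2 y -> N y * norm2 (z - y) <= e * norm2 y ^+ 3 ->
  - (e * norm2 (z - y)) <= N z / norm2 z - N y / norm2 y.
Proof.
move=> y0 z0 Ny0.
set r := norm2 y; set s := norm2 z; set rho := norm2 (z - y).
set a := N y; set D := dotv y z => vi rho_le Nrho_le.
have r0 : 0 < r := norm2_gt0 y0; have s0 : 0 < s := norm2_gt0 z0.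
have rho0 : 0 <= rho := norm2_ge0 _.
have r_le : r <= 2 * s by have := ler_norm2_sub y z; rewrite norm2_distC -/rho -/r -/s; lra.
have gap : 2 * (r * s - D) <= rho ^+ 2.
  have := sqr_ge0 (s - r); rewrite /rho norm2B_sqr dotvC -/D -/r -/s; nra.
have e_rho : 0 <= e * rho.
  have : 0 <= e * r ^+ 3 by apply: le_trans Nrho_le; rewrite mulr_ge0.
  by rewrite pmulr_lge0 ?exprn_gt0 // => /mulr_ge0; apply.
have -> : N z / s - a / r = (N z * r ^+ 2 - a * r * s) / (r ^+ 2 * s).
  by field; rewrite !gt_eqF.
rewrite ler_pdivlMr ?mulr_gt0 ?exprn_gt0 //.
have a_gap : a * (r * s - D) <= e * rho * (r ^+ 2 * s).
  have h1 : a * (2 * (r * s - D)) <= a * rho ^+ 2 by rewrite ler_wpM2l.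
  have h2 : a * rho * rho <= e * r ^+ 3 * rho by rewrite ler_wpM2r.
  have h3 : e * rho * r ^+ 2 * r <= e * rho * r ^+ 2 * (2 * s).
    by rewrite ler_wpM2l // mulr_ge0 ?sqr_ge0.
  nra.
nra.
Qed.

Lemma ratio_vi_stationary y : S y -> y <> 0 -> 0 <= N y -> ratio_vi y ->
  stationary ratio_obj y.
Proof.
move=> Sy y0 Ny0 vi; rewrite /stationary /frechet_subdiff (ratio_objE Sy y0).
split=> // e e0; have r0 : 0 < norm2 y := norm2_gt0 y0.
have a1 : 0 < N y + 1 by rewrite ltr_pwDr.
exists (Num.min (norm2 y / 2) (e * norm2 y ^+ 3 / (N y + 1))).
  by rewrite lt_min !divr_gt0 ?mulr_gt0 ?exprn_gt0.
move=> z /andP[rho0]; rewrite lt_min => /andP[rho_r rho_e].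
rewrite dotv0l /ratio_obj; case: asboolP => [[Sz z0]|_]; last first.
  have -> : (+oo - (N y / norm2 y)%:E - 0%:E = +oo :> \bar R)%E by [].
  by rewrite mulyr gtr0_sg ?invr_gt0 // mul1e leey.
rewrite -!EFinB -EFinM lee_fin subr0 ler_pdivlMr // mulNr.
apply: ratio_increment_ge => //; first exact: vi.
- by move: rho_r; rewrite ltr_pdivlMr //; lra.
- move: rho_e; rewrite ltr_pdivlMr // => h.
  have : N y * norm2 (z - y) <= (N y + 1) * norm2 (z - y).
    by rewrite ler_wpM2r ?norm2_ge0 // lerDl.
  lra.
Qed.

End RatioObjective.

Lemma le_at_accumulation {R : realType} {n : nat} [g : 'cV[R]_n -> R]
    [xs : nat -> 'cV[R]_n] [p : 'cV[R]_n] [c K : R] :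
  0 <= K ->
  (forall y (t : R), norm2 (y - p) <= t -> t <= 1 -> g p <= g y + t * K) ->
  accumulation_pt xs p ->
  (forall e : R, 0 < e -> \forall k \near \oo, g (xs k) <= c + e) ->
  g p <= c.
Proof.
move=> K0 g_calm acc g_le; apply/ler_addgt0Pr => e e0.
have e2 : 0 < e / 2 by rewrite divr_gt0.
have [N _ gN] := g_le _ e2.
have K1 : 0 < K + 1 by rewrite ltr_pwDr.
set t := Num.min 1 (e / 2 / (K + 1)).
have t0 : 0 < t by rewrite lt_min ltr01 divr_gt0.
have t1 : t <= 1 by rewrite ge_min lexx.
have tK : t * K <= e / 2.
  have : t <= e / 2 / (K + 1) by rewrite ge_min lexx orbT.
  by rewrite ler_pdivlMr // => ?; nra.
have [k kN xk] := acc t t0 N.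
have := g_calm (xs k) t (ltW xk) t1; have := gN k kN; lra.
Qed.

Lemma oppr_le_mul_of_norm_le {R : realDomainType} (u v a c : R) :
  `|u| <= a -> `|v| <= c -> - (a * c) <= u * v.
Proof.
move=> ua vc; rewrite lerNl; apply: le_trans (ler_norm _) _.
by rewrite normrN normrM ler_pM.
Qed.

Lemma vi_gap_calm {R : realType} {n : nat} (x z : 'cV[R]_n) :
  exists2 K : R, 0 <= K & forall y (t : R), norm2 (y - x) <= t -> t <= 1 ->
    norm1 x * dotv x z - norm1 z * norm2 x ^+ 2 <=
      norm1 y * dotv y z - norm1 z * norm2 y ^+ 2 + t * K.
Proof.
have x2 := norm2_ge0 x; have z2 := norm2_ge0 z; have z1 := norm1_ge0 z.
exists (n%:R * (norm2 x + 1) * norm2 z + norm1 x * norm2 z +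
        norm1 z * (2 * norm2 x + 1)).
  by rewrite !addr_ge0 ?mulr_ge0 ?addr_ge0 ?mulr_ge0 ?norm1_ge0.
move=> y t yx t1; set dl := y - x; have t0 : 0 <= t := le_trans (norm2_ge0 _) yx.
have y_def : y = x + dl by rewrite addrC subrK.
have y_le : norm2 y <= norm2 x + 1.
  by rewrite y_def; apply: le_trans (ler_norm2D _ _) _; rewrite lerD2l; lra.
have sqr_le : norm2 y ^+ 2 <= norm2 x ^+ 2 + t * (2 * norm2 x + 1).
  rewrite y_def norm2D_sqr; have := ler_dotv x dl; have := norm2_ge0 dl.
  move: yx; rewrite -/dl; nra.
have norm1_part : - (n%:R * t * ((norm2 x + 1) * norm2 z)) <=
    (norm1 y - norm1 x) * dotv y z.
  apply: oppr_le_mul_of_norm_le.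
    by apply: le_trans (norm1_dist_le _ _) _; rewrite ler_wpM2l ?ler0n.
  by apply: le_trans (dotv_le _ _) _; rewrite ler_wpM2r.
have dot_part : - (norm1 x * (t * norm2 z)) <= norm1 x * dotv dl z.
  apply: oppr_le_mul_of_norm_le; first by rewrite ger0_norm ?norm1_ge0.
  by apply: le_trans (dotv_le _ _) _; rewrite ler_wpM2r.
have -> : norm1 y * dotv y z = norm1 x * dotv x z +
    (norm1 y - norm1 x) * dotv y z + norm1 x * dotv dl z.
  by rewrite y_def dotvDl; ring.
have := ler_wpM2l z1 sqr_le; lra.
Qed.

Section Problems.
Context {R : realType} {m n : nat} {A : 'M[R]_(m, n)} {b : 'cV[R]_m} {eps d : R}.
Implicit Types (x y z : 'cV[R]_n).

Lemma Qlam_ratio (lam : R) :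
  Qlam A b eps d lam = ratio_obj (inD d) (fun x => lam * norm1 x + env b eps (A *m x)).
Proof. by []. Qed.

Lemma Phi_ratio :
  Phi A b eps d = ratio_obj (fun x => inD d x /\ inC b eps (A *m x)) norm1.
Proof.
apply/funext => x; rewrite /Phi /ratio_obj.
by congr (if _ then _ else _); apply: asbool_equiv_eq; tauto.
Qed.

Lemma stationary_Qlam [lam : R] [x] : 0 <= lam -> stationary (Qlam A b eps d lam) x ->
  [/\ inD d x, x <> 0 &
      ratio_vi (inD d) (fun x => lam * norm1 x + env b eps (A *m x)) x].
Proof.
rewrite Qlam_ratio => lam0 st; have [xD x0] := ratio_obj_fin_num _ _ st.1.
split=> //; apply: stationary_ratio_vi; last exact: st.
- move=> y z t t01 yD zD; apply: le_trans (norm2_convex _ _ t01) _.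
  by move: t01 yD zD; rewrite /inD => /andP[? ?] ? ?; nra.
- move=> y z t t01 _ _; rewrite mulmxDr -!scalemxAr.
  have := env_convex b eps (A *m y) (A *m z) t01.
  have := ler_wpM2l lam0 (norm1_convex y z t01).
  by case/andP: t01 => ? ?; nra.
- by move=> y _; rewrite addr_ge0 ?env_ge0 ?mulr_ge0 ?norm1_ge0.
Qed.

Lemma Qlam_vi_feasible [lam : R] [y z] : 0 < lam ->
  ratio_vi (inD d) (fun x => lam * norm1 x + env b eps (A *m x)) y ->
  inD d z -> inC b eps (A *m z) ->
  norm1 y * dotv y z <= norm1 z * norm2 y ^+ 2.
Proof.
move=> lam0 vi zD zC; have := vi z zD; rewrite (env_eq0 _ _ zC) addr0.
have [D0|D0] := leP (dotv y z) 0.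
  move=> _; apply: le_trans (_ : 0 <= _); last by rewrite mulr_ge0 ?norm1_ge0 ?sqr_ge0.
  by rewrite mulr_ge0_le0 ?norm1_ge0.
have := env_ge0 b eps (A *m y); have := norm1_ge0 y; have := norm1_ge0 z; nra.
Qed.

Lemma env_le_of_Qlam_le [lam c : R] [x] : 0 < lam -> inD d x -> x <> 0 ->
  (Qlam A b eps d lam x / lam%:E <= c%:E)%E -> env b eps (A *m x) <= c * d * lam.
Proof.
move=> lam0 xD x0; rewrite Qlam_ratio (ratio_objE _ _ xD x0) inver gt_eqF // -EFinM lee_fin.
have Nx0 : 0 < norm2 x := norm2_gt0 x0.
rewrite ler_pdivrMr // ler_pdivrMr // => Q_le.
have lhs_ge0 : 0 <= lam * norm1 x + env b eps (A *m x).
  by rewrite addr_ge0 ?env_ge0 ?mulr_ge0 ?norm1_ge0 ?ltW.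
have c0 : 0 <= c.
  by have := le_trans lhs_ge0 Q_le; rewrite -mulrA pmulr_lge0 // mulr_gt0.
have : c * lam * norm2 x <= c * lam * d by rewrite ler_wpM2l // mulr_ge0 // ltW.
have := norm1_ge0 x; have := ltW lam0; nra.
Qed.

Lemma inD_accumulation [xs : nat -> 'cV[R]_n] [p] :
  (forall k, inD d (xs k)) -> accumulation_pt xs p -> inD d p.
Proof.
move=> xsD acc; apply: (le_at_accumulation (g := norm2) ler01 _ acc).
  move=> y t yp _; rewrite mulr1; apply: le_trans (ler_norm2_sub p y) _.
  by rewrite lerD2l norm2_distC.
by move=> e e0; apply: nearW => k; apply: le_trans (xsD k) _; rewrite lerDl ltW.
Qed.

Lemma inC_accumulation [xs : nat -> 'cV[R]_n] [p] :
  (fun k => env b eps (A *m xs k)) @ \oo --> 0 -> accumulation_pt xs p ->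
  inC b eps (A *m p).
Proof.
move=> env_cvg acc; have [K K0 AK] := norm2_mulmx_le A.
apply: (le_at_accumulation (g := fun x => norm2 (A *m x - b)) K0 _ acc).
  move=> y t yp _.
  have -> : A *m p - b = (A *m y - b) + A *m (p - y).
    by rewrite mulmxBr [RHS]addrC addrA subrK.
  apply: le_trans (ler_norm2D _ _) _; rewrite lerD2l mulrC.
  by apply: le_trans (AK _) _; rewrite ler_wpM2l // norm2_distC.
move=> e e0; have e2 : 0 < e ^+ 2 / 2 by rewrite divr_gt0 ?exprn_gt0.
apply: filterS (cvgr_lt _ env_cvg _ e2) => k /ltW.
exact: norm2_le_of_env_le (ltW e0).
Qed.

Lemma inC_neq0 [x] : eps < norm2 b -> inC b eps (A *m x) -> x <> 0.
Proof. by move=> epsb + x0; rewrite /inC x0 mulmx0 sub0r norm2N; lra. Qed.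

End Problems.

Theorem mainTheorem5 (R : realType) (m n : nat) (A : 'M[R]_(m, n)) (b : 'cV[R]_m)
  (eps d : R) (lam : nat -> R) (xs : nat -> 'cV[R]_n) :
  0 <= eps -> eps < norm2 b -> 0 < d ->
  (forall k, 0 < lam k) -> (forall k, lam k.+1 <= lam k) ->
  lam @ \oo --> (0 : R) ->
  (forall k, stationary (Qlam A b eps d (lam k)) (xs k)) ->
  bounded_seq xs /\
  ((exists x0 : 'cV[R]_n,
       interior_pt (fun x => inD d x) x0 /\
       interior_pt (fun x => inC b eps (A *m x)) x0) ->
   (exists2 xhat : 'cV[R]_n, inD d xhat /\ inC b eps (A *m xhat) &
       forall k, (Qlam A b eps d (lam k) (xs k) / (lam k)%:E
                  <= (norm1 xhat / norm2 xhat)%:E)%E) ->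
   forall xstar : 'cV[R]_n, accumulation_pt xs xstar ->
     (inD d xstar /\ inC b eps (A *m xstar)) /\
     stationary (Phi A b eps d) xstar).
Proof.
move=> _ eps_lt _ lam0 _ lam_cvg stat.
have stat_k k := stationary_Qlam (ltW (lam0 k)) (stat k).
have xsD k : inD d (xs k) by case: (stat_k k).
split; first by exists d.
move=> _ [xhat _ Q_le] xstar acc.
set c := norm1 xhat / norm2 xhat.
have env_cvg : (fun k => env b eps (A *m xs k)) @ \oo --> 0.
  apply: (@squeeze_cvgr _ _ _ _ (cst 0) (fun k => c * d * lam k)).
  - apply: nearW => k; rewrite env_ge0 /=; case: (stat_k k) => _ xs0 _.
    exact: env_le_of_Qlam_le (lam0 k) (xsD k) xs0 (Q_le k).
  - exact: cvg_cst.
  - by rewrite -(mulr0 (c * d)); apply: cvgM => //; exact: cvg_cst.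
have xstarD := inD_accumulation xsD acc.
have xstarC := inC_accumulation env_cvg acc.
split=> //; rewrite Phi_ratio; apply: ratio_vi_stationary => //.
- exact: inC_neq0 eps_lt xstarC.
- exact: norm1_ge0.
move=> z [zD zC]; rewrite -subr_le0; have [K K0 gap_calm] := vi_gap_calm xstar z.
apply: (le_at_accumulation K0 gap_calm acc) => e e0; apply: nearW => k.
case: (stat_k k) => _ _ vi; rewrite add0r; apply: le_trans (ltW e0).
by rewrite subr_le0; exact: Qlam_vi_feasible (lam0 k) vi zD zC.
Qed.
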